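(* Let $p,q$ be primes and let $G$ be a non-abelian group of order $pq$. Then $G$ is a metacyclic group with trivial centre, and its right and left commutation semigroups $\mathrm{P}(G)$ and $\Lambda(G)$ are complete (with respect to a presentation of $G$ as $G(m,n,k)$).
   Context: For positive integers $m,n,k$ with $(m,k-1)=1$ and $n=\mathrm{ind}_m(k)$ (the least $d\ge1$ with $k^d\equiv1\pmod m$), $G(m,n,k)=\langle a,b;\ a^m=1,\ b^n=1,\ b^{-1}ab=a^k\rangle$; elements are written uniquely as $a^ib^j$, $i\in\mathbb{Z}_m$, $j\in\mathbb{Z}_n$, and $k_t=k^t-1\pmod m$. Commutators are $[x,y]=x^{-1}y^{-1}xy$; $(x)\rho(g)=[x,g]$, $(x)\lambda(g)=[g,x]$; maps are written on the right and composed left to right; $\mathrm{P}(G)$, $\Lambda(G)$ are the semigroups generated by all $\rho(g)$, resp. all $\lambda(g)$. With $R=\{k_j:j\in\mathbb{Z}_n\}$, $L=\{-k_j:j\in\mathbb{Z}_n\}$ one has $\mathrm{P}(G)=\Sigma_G(R)$, $\Lambda(G)=\Sigma_G(L)$, and completeness of $\mathrm{P}(G)$, $\Lambda(G)$ means completeness of $\Sigma_G(R)$, $\Sigma_G(L)$. Here: $(a^ib^j)\mu(x,y)=a^{xik^j-yk_j}$, $C(x,y)=\{\mu(x,yz):z\in\mathbb{Z}_m\}$; $S^*$ is the multiplicative subsemigroup of $\mathbb{Z}_m$ generated by $S$; $\Sigma_G(S)$ is the semigroup generated by $\{\mu(s,z):s\in S,z\in\mathbb{Z}_m\}$; for $x\in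 S^*$, $Y(x)=\{s^*z: s^*\in S^*, z\in\mathbb{Z}_m, \exists s\in S,\ x\equiv ss^*\}$; the $x$-family $\{C(x,y):y\in Y(x)\}$ is complete if it contains $C(x,1)$; $\Sigma_G(S)$ is complete if all $x$-families ($x\in S^*$) are complete. *)

From mathcomp Require Import all_boot all_order all_algebra all_fingroup all_solvable.
Set Implicit Arguments. Unset Strict Implicit. Unset Printing Implicit Defensive.
Import GRing.Theory Num.Theory.
Local Open Scope ring_scope.

Definition is_ind (m k n : nat) : Prop :=
  [/\ (0 < n)%N, (k ^ n = 1 %[mod m])%N &
      forall d : nat, (0 < d)%N -> (d < n)%N -> (k ^ d <> 1 %[mod m])%N].

Definition kt (k t : nat) : int := (k ^ t)%:Z - 1.

(* (a^i b^j) mu(x,y) = a^(x i k^j - y k_j) : exponent of a, reduced mod m *)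
Definition mu (m k : nat) (x y : int) (i : int) (j : nat) : int :=
  ((x * i * (k ^ j)%:Z - y * kt k j) %% m%:Z)%Z.

(* mu(x,y) = mu(x',y') as maps on G(m,n,k) = { a^i b^j : i in Z_m, j in Z_n } *)
Definition mu_eq (m n k : nat) (x y x' y' : int) : Prop :=
  forall (i j : nat), (i < m)%N -> (j < n)%N ->
    mu m k x y i%:Z j = mu m k x' y' i%:Z j.

(* C(x,y) = C(x,y') as sets of maps {mu(x, y z) : z in Z_m} *)
Definition C_eq (m n k : nat) (x y y' : int) : Prop :=
  (forall z : int, exists z' : int, mu_eq m n k x (y * z) x (y' * z')) /\
  (forall z' : int, exists z : int, mu_eq m n k x (y' * z') x (y * z)).

(* S^* : multiplicative subsemigroup of Z_m generated by S (membership up to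
   congruence mod m) *)
Inductive Sstar (m : nat) (S : int -> Prop) : int -> Prop :=
  | Sstar_gen s x : S s -> (x = s %[mod m%:Z])%Z -> Sstar m S x
  | Sstar_mul a b x : Sstar m S a -> Sstar m S b ->
      (x = a * b %[mod m%:Z])%Z -> Sstar m S x.

Definition Yset (m : nat) (S : int -> Prop) (x y : int) : Prop :=
  exists (ss z s : int), [/\ Sstar m S ss, S s,
    (x = s * ss %[mod m%:Z])%Z & (y = ss * z %[mod m%:Z])%Z].

Definition family_complete (m n k : nat) (S : int -> Prop) (x : int) : Prop :=
  exists y : int, Yset m S x y /\ C_eq m n k x y 1.

Definition Sigma_complete (m n k : nat) (S : int -> Prop) : Prop :=
  forall x : int, Sstar m S x -> family_complete m n k S x.

Definition Rset (m n k : nat) (s : int) : Prop :=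
  exists j : nat, (j < n)%N /\ (s = kt k j %[mod m%:Z])%Z.
Definition Lset (m n k : nat) (s : int) : Prop :=
  exists j : nat, (j < n)%N /\ (s = - kt k j %[mod m%:Z])%Z.

Definition P_complete (m n k : nat) : Prop := Sigma_complete m n k (Rset m n k).
Definition Lambda_complete (m n k : nat) : Prop := Sigma_complete m n k (Lset m n k).

(* Let p < q.  The Sylow q-subgroup <x> of G is normal, so G = <x> <*> <y> with
   #[y] = p and x ^ y = x ^+ k, where 1 < k < q and k ^ p = 1 (mod q); this gives
   the metacyclic structure and the presentation G(q, p, k).  The centre is
   trivial because G / 'Z(G) cannot be cyclic, so #|G : 'Z(G)| is neither 1 nor
   prime.  Completeness only uses that m = q is prime and that R and L contain 0
   and the unit +-(k - 1): every x in S^* is then 0 or a unit mod q, in both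
   cases some y in Y(x) is a unit, and C(x, y) = C(x, 1) for a unit y. *)

From mathcomp Require Import all_boot all_order all_algebra all_fingroup all_solvable.
From mathcomp Require Import zify ring.
Import GRing.Theory Num.Theory.
Set Implicit Arguments. Unset Strict Implicit. Unset Printing Implicit Defensive.

Section Completeness.
Local Open Scope ring_scope.
Variables (m n k : nat).

Lemma eqz_modP (a b : int) : (a = b %[mod m%:Z])%Z <-> (m%:Z %| a - b)%Z.
Proof. by rewrite -eqz_mod_dvd; split=> /eqP. Qed.

Lemma mu_congr_mod x y y' i j : (y = y' %[mod m%:Z])%Z -> mu m k x y i j = mu m k x y' i j.
Proof.
move/eqz_modP=> dy; apply/eqz_modP.
have -> : x * i * (k ^ j)%:Z - y * kt k j - (x * i * (k ^ j)%:Z - y' * kt k j)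
   = - ((y - y') * kt k j) by ring.
by rewrite rpredN dvdz_mulr.
Qed.

Lemma C_eq1_coprime x y : coprimez y m%:Z -> C_eq m n k x y 1.
Proof.
case/coprimezP=> [[a b]] /= Bezout; split=> z.
  by exists (y * z) => i j _ _; rewrite mul1r.
exists (a * z) => i j _ _; apply: mu_congr_mod; apply/eqz_modP.
have -> : 1 * z - y * (a * z) = (b * z) * m%:Z by rewrite -[1 in LHS]Bezout; ring.
exact: dvdz_mull.
Qed.

Lemma Euler_expz_totient (u : int) : coprimez u m%:Z -> (u ^+ totient m = 1 %[mod m%:Z])%Z.
Proof.
move=> cop_um; have [-> | m_gt0] := posnP m; first by rewrite expr0.
rewrite -modzXm -[(u %% m)%Z]gez0_abs ?modz_ge0 -?lt0n //.
rewrite -natz -natrX natz modz_nat Euler_exp_totient -?modz_nat //.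
by rewrite -[m in coprime _ m]absz_nat -coprimezE /coprimez gcdz_modl.
Qed.

Lemma Sstar_exp (S : int -> Prop) u e : S u -> (0 < e)%N -> Sstar m S (u ^+ e).
Proof.
move=> Su; elim: e => [|[|e] IHe] // _; first exact: Sstar_gen Su _.
by apply: Sstar_mul (IHe isT) (Sstar_gen Su (erefl _)) _; rewrite exprSr.
Qed.

Lemma Sigma_complete_prime (S : int -> Prop) u :
  prime m -> S 0 -> S u -> coprimez u m%:Z -> Sigma_complete m n k S.
Proof.
move=> m_pr S0 Su cop_um x Sx.
have t_gt0 : (0 < totient m)%N by rewrite totient_gt0 prime_gt0.
(* [w] inverts [u]; doubling the exponent keeps [w] a positive power of [u],
   hence in [S^*], even when [totient m = 1]. *)
pose w := u ^+ (totient m).*2.-1.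
have Sw : Sstar m S w by apply: Sstar_exp Su _; lia.
have uw1 : (u * w = 1 %[mod m%:Z])%Z.
  rewrite -exprS prednK ?double_gt0 // -addnn exprD.
  have ut1 := Euler_expz_totient cop_um.
  by rewrite -modzMml ut1 modzMml mul1r.
have cop_wm : coprimez w m%:Z by exact: coprimezXl.
have [mx | mNx] := boolP (m%:Z %| x)%Z.
  exists u; split; last exact: C_eq1_coprime.
  exists u, 1, 0; split; [exact: Sstar_gen Su _ | by [] | | by rewrite mulr1].
  by apply/eqz_modP; rewrite mul0r subr0.
have cop_xm : coprimez x m%:Z.
  by rewrite coprimezE coprime_sym prime_coprime // -dvdzE.
exists (x * w); split; last by apply: C_eq1_coprime; rewrite coprimezMl cop_xm.
exists (x * w), 1, u; split; [exact: Sstar_mul Sx Sw _ | by [] | | by rewrite mulr1].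
by rewrite mulrCA -modzMmr uw1 modzMmr mulr1.
Qed.

Lemma kt0 : kt k 0 = 0.
Proof. by rewrite /kt expn0 subrr. Qed.

Lemma coprimez_kt1 : prime m -> coprime m (k - 1) -> coprimez (kt k 1) m%:Z.
Proof.
case: k => [|k'] m_pr; first by rewrite sub0n /coprime gcdn0 => /eqP m1; rewrite m1 in m_pr.
by rewrite /kt expn1 subn1 /= intS addrC addKr coprimezE coprime_sym.
Qed.

Lemma P_complete_prime : prime m -> (1 < n)%N -> coprime m (k - 1) -> P_complete m n k.
Proof.
move=> m_pr n_gt1 cop_mk; apply: (Sigma_complete_prime (u := kt k 1)) => //.
- by exists 0%N; rewrite kt0 ltnW.
- by exists 1%N.
exact: coprimez_kt1.
Qed.

Lemma Lambda_complete_prime : prime m -> (1 < n)%N -> coprime m (k - 1) ->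
  Lambda_complete m n k.
Proof.
move=> m_pr n_gt1 cop_mk; apply: (Sigma_complete_prime (u := - kt k 1)) => //.
- by exists 0%N; rewrite kt0 oppr0 ltnW.
- by exists 1%N.
by rewrite coprimeNz coprimez_kt1.
Qed.

End Completeness.

Lemma dvdn_mul_primes p q d : prime p -> prime q -> (d %| p * q)%N ->
  [\/ d = 1, d = p, d = q | d = p * q]%N.
Proof.
move=> p_pr q_pr d_pq.
have [p_d | pNd] := boolP (p %| d)%N.
  have /primeP[_ q_div] := q_pr.
  rewrite -(divnK p_d) mulnC dvdn_pmul2l ?prime_gt0 // in d_pq.
  rewrite -(divnK p_d) mulnC.
  by case/orP: (q_div _ d_pq) => /eqP->; [rewrite muln1; apply: Or42 | apply: Or44].
rewrite Gauss_dvdr 1?coprime_sym ?prime_coprime // in d_pq.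
by have /primeP[_ /(_ _ d_pq)/orP[]/eqP] := q_pr; [apply: Or41 | apply: Or43].
Qed.

Lemma is_ind_prime m k n : prime n -> (k ^ n = 1 %[mod m])%N ->
  (k != 1 %[mod m])%N -> is_ind m k n.
Proof.
move=> n_pr kn1 kN1; split=> [||d d_gt0 d_lt_n kd1]; rewrite ?prime_gt0 //.
have [u v Bezout _] := egcdnP n d_gt0.
have /eqP cop_dn : coprime d n by rewrite coprime_sym prime_coprime // gtnNdvd.
rewrite cop_dn in Bezout; apply: (negP kN1).
have kX1 e j : (k ^ j = 1 %[mod m])%N -> (k ^ (e * j) = 1 %[mod m])%N.
  by move=> kj1; rewrite mulnC expnM -modnXm kj1 modnXm exp1n.
by rewrite -(kX1 u d kd1) Bezout expnD expn1 -modnMml kX1 // modnMml mul1n.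
Qed.

Section PqGroups.
Local Open Scope group_scope.
Variable gT : finGroupType.
Implicit Types (G : {group gT}) (x y : gT).

Lemma joing_cycles_coprime G x y : x \in G -> y \in G -> coprime #[x] #[y] ->
  (#[x] * #[y])%N = #|G| -> <[x]> <*> <[y]> = G.
Proof.
move=> Gx Gy cop oG; have sXG : <[x]> <*> <[y]> \subset G.
  by rewrite join_subG !cycle_subG Gx Gy.
apply/eqP; rewrite eqEcard sXG -oG !orderE -TI_cardMg ?coprime_TIg -?orderE //.
by apply/subset_leq_card/mul_subG; rewrite ?joing_subl ?joing_subr.
Qed.

Lemma abelian_joing_cycles x y : commute x y -> abelian (<[x]> <*> <[y]>).
Proof.
by move=> cxy; rewrite abelianY !cycle_abelian cent_cycle cycle_subG; apply/cent1P.
Qed.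

Lemma metacyclic_joing_cycles x y : x ^ y \in <[x]> -> metacyclic (<[x]> <*> <[y]>).
Proof.
move=> xy_x; have nXY : <[y]> \subset 'N(<[x]>) by rewrite norms_cycle.
apply/metacyclicP; exists <[x]>%G; rewrite cycle_cyclic normalYl nXY.
by rewrite quotientYidl // quotient_cyclic ?cycle_cyclic.
Qed.

Lemma index_center_not_prime G : ~~ abelian G -> ~~ prime #|G : 'Z(G)|.
Proof.
apply: contra => pr_iZ; apply: cyclic_center_factor_abelian; apply: prime_cyclic.
by rewrite card_quotient ?normal_norm ?center_normal.
Qed.

Variables (p q : nat).
Hypotheses (p_pr : prime p) (q_pr : prime q).

Lemma center_pq_trivial G : #|G| = (p * q)%N -> ~~ abelian G -> 'Z(G) = 1.
Proof.
move=> oG nabG; have := index_center_not_prime nabG.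
have iZ : #|G : 'Z(G)| = (p * q %/ #|'Z(G)|)%N by rewrite -divgS ?center_sub ?oG.
have p_gt0 := prime_gt0 p_pr; have q_gt0 := prime_gt0 q_pr.
have /dvdn_mul_primes[] // : (#|'Z(G)| %| p * q)%N by rewrite -oG cardSg ?center_sub.
- by move/eqP; rewrite -trivg_card1 => /eqP.
- by move=> oZ; rewrite iZ oZ mulKn ?q_pr.
- by move=> oZ; rewrite iZ oZ mulnK ?p_pr.
move=> oZ; rewrite oZ divnn muln_gt0 p_gt0 q_gt0 in iZ.
by move: nabG; rewrite -(index1g (center_sub G) iZ) center_abelian.
Qed.

Hypothesis p_lt_q : (p < q)%N.

Lemma card_Syl_pq G : #|G| = (p * q)%N -> #|'Syl_q(G)| = 1%N.
Proof.
move=> oG; have := card_Syl_mod G q_pr.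
have /dvdn_mul_primes[] // : (#|'Syl_q(G)| %| p * q)%N by rewrite -oG card_Syl_dvd.
- by move=> ->; rewrite modn_small // => p1; move: p_pr; rewrite p1.
- by move=> ->; rewrite modnn.
by move=> ->; rewrite modnMl.
Qed.

Lemma normal_cycle_pq G : #|G| = (p * q)%N ->
  exists2 x, #[x] = q & <[x]> <| G.
Proof.
move=> oG; have /normal_sylowP[P sylP nPG] : #|'Syl_q(G)| == 1%N by rewrite card_Syl_pq.
have oP : #|P| = q.
  rewrite (card_Hall sylP) oG p_part lognM ?prime_gt0 //.
  by rewrite !logn_prime // eqxx (gtn_eqF p_lt_q) expn1.
have /cyclicP[x defP] : cyclic P by rewrite prime_cyclic ?oP.
by exists x; rewrite -?defP // orderE -defP oP.
Qed.

Lemma pq_group_generators G : #|G| = (p * q)%N -> ~~ abelian G ->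
  exists x y k, [/\ <[x]> <*> <[y]> = G, #[x] = q, #[y] = p,
                    x ^ y = x ^+ k & (1 < k < q)%N].
Proof.
move=> oG nabG; have [x ox nXG] := normal_cycle_pq oG.
have [y Gy oy] : {y | y \in G & #[y] = p} by apply: Cauchy; rewrite // oG dvdn_mulr.
have Gx : x \in G by rewrite (subsetP (normal_sub nXG)) ?cycle_id.
have defG : <[x]> <*> <[y]> = G.
  apply: joing_cycles_coprime; rewrite // ?ox ?oy 1?mulnC //.
  by rewrite prime_coprime // dvdn_prime2 // gtn_eqF.
have : x ^ y \in <[x]> by rewrite memJ_norm ?cycle_id ?(subsetP (normal_norm nXG)).
case/cycleP=> i; rewrite -expg_mod_order ox; set k := (i %% q)%N => xy.
have k_gt1 : (1 < k)%N.
  rewrite ltnNge leq_eqVlt ltnS leqn0; apply/negP => /orP[]/eqP k_small.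
    move: xy; rewrite k_small expg1 => /conjg_fixP/commgP cxy.
    by move: nabG; rewrite -defG abelian_joing_cycles.
  move: xy; rewrite k_small expg0 => /eqP; rewrite conjg_eq1 -order_eq1 ox.
  by move=> /eqP q1; move: q_pr; rewrite q1.
by exists x, y, k; rewrite k_gt1 ltn_pmod ?prime_gt0.
Qed.

End PqGroups.

Section Presentation.
Local Open Scope group_scope.
Variable gT : finGroupType.
Implicit Types (G : {group gT}) (x y : gT).

Lemma conjg_expn x y k i : x ^ y = x ^+ k -> x ^ (y ^+ i) = x ^+ (k ^ i).
Proof.
move=> xy; elim: i => [|i IHi]; first by rewrite conjg1 expn0.
by rewrite expgSr conjgM IHi conjXg xy -expgM -expnS.
Qed.

Lemma expn_order_conj_mod x y k : x ^ y = x ^+ k -> (k ^ #[y] = 1 %[mod #[x]])%N.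
Proof.
move/(conjg_expn #[y]); rewrite expg_order conjg1 => /eqP.
by rewrite -{1}(expg1 x) eq_expg_mod_order eq_sym => /eqP.
Qed.

Lemma Zp_aut_expn m n k : (1 < m)%N -> coprime m k -> (k ^ n = 1 %[mod m])%N ->
  exists s : {perm 'Z_m},
    [/\ s \in Aut <[Zp1 : 'Z_m]>, (#[s] %| n)%N & s Zp1 = (Zp1 : 'Z_m) ^+ k].
Proof.
move=> m_gt1 cop_mk kn1; have o1 : #[Zp1 : 'Z_m] = m by rewrite order_Zp1 Zp_cast.
have uk : (k%:R : 'Z_#[Zp1 : 'Z_m])%R \is a GRing.unit by rewrite unitZpE o1.
exists (Zp_unitm (FinRing.unit _ uk)); split; first exact: Aut_aut.
  rewrite order_injm ?injm_Zp_unitm ?in_setT // order_dvdn -val_eqE /=.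
  by rewrite FinRing.val_unitX /= -natrX -Zp_nat_mod o1 // kn1 modn_small.
rewrite autE ?cycle_id //= /cyclem.
by rewrite val_Zp_nat ?o1 // -[X in (_ %% X)%N]o1 expg_mod_order.
Qed.

Lemma coprime_order_conj_exp x y k : x ^ y = x ^+ k -> coprime #[x] k.
Proof.
move=> xy; have := orderJ x y; rewrite xy orderXgcd => oxk.
rewrite /coprime eqn_leq gcdn_gt0 order_gt0 andbT leqNgt; apply/negP => g_gt1.
by move: (ltn_Pdiv g_gt1 (order_gt0 x)); rewrite oxk ltnn.
Qed.

Lemma isog_Grp_cycles G x y m n k : (1 < m)%N -> (1 < n)%N -> #|G| = (n * m)%N ->
    <[x]> <*> <[y]> = G -> #[x] = m -> #[y] = n -> x ^ y = x ^+ k ->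
  G \isog Grp (a : b : (a ^+ m, b ^+ n, a ^ b = a ^+ k)).
Proof.
move=> m_gt1 n_gt1 oG defG ox oy xy.
have cop_mk : coprime m k by rewrite -ox (coprime_order_conj_exp xy).
have kn1 : (k ^ n = 1 %[mod m])%N by rewrite -ox -oy expn_order_conj_mod.
have isoE := Extremal.Grp n_gt1 m_gt1 (Zp_aut_expn m_gt1 cop_mk kn1).
apply: (isoGrp_trans _ isoE); apply/(isoGrpP _ isoE); rewrite Extremal.card //.
split=> //; apply/existsP; exists (x, y); rewrite /= !xpair_eqE.
by rewrite defG -ox -oy xy !expg_order !eqxx.
Qed.

End Presentation.

Theorem theorem6p6 (gT : finGroupType) (G : {group gT}) (p q : nat) :
  prime p -> prime q -> #|G| = (p * q)%N -> ~~ abelian G ->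
  [/\ metacyclic G, ('Z(G) = 1)%g &
      exists m n k : nat,
        [/\ [/\ (0 < m)%N, (0 < k)%N, coprime m (k - 1) & is_ind m k n],
            (G \isog Grp (a : b : (a ^+ m, b ^+ n, a ^ b = a ^+ k)))%g,
            P_complete m n k & Lambda_complete m n k]].
Proof.
move=> p_pr q_pr oG nabG.
wlog p_lt_q : p q p_pr q_pr oG / (p < q)%N => [wlog_pq | ].
  have [p_lt_q | q_lt_p | p_eq_q] := ltngtP p q; first exact: (wlog_pq p q).
    by apply: (wlog_pq q p); rewrite // mulnC.
  by rewrite (card_p2group_abelian p_pr) // oG p_eq_q in nabG.
have [x [y [k [defG ox oy xy /andP[k_gt1 k_lt_q]]]]] :=
  pq_group_generators p_pr q_pr p_lt_q oG nabG.
have cop_qk1 : coprime q (k - 1) by rewrite prime_coprime // gtnNdvd //; lia.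
split; first by rewrite -defG metacyclic_joing_cycles // xy mem_cycle.
  exact: center_pq_trivial p_pr q_pr G oG nabG.
exists q, p, k; split.
- split; [exact: prime_gt0 | exact: ltnW | by [] | apply: is_ind_prime => //].
    by rewrite -ox -oy expn_order_conj_mod.
  by rewrite (modn_small k_lt_q) modn_small ?prime_gt1 // gtn_eqF.
- exact: isog_Grp_cycles (prime_gt1 q_pr) (prime_gt1 p_pr) oG defG ox oy xy.
- exact: P_complete_prime q_pr (prime_gt1 p_pr) cop_qk1.
exact: Lambda_complete_prime q_pr (prime_gt1 p_pr) cop_qk1.
Qed.
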